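(* Let $H=(V,E)$ be a $3$-uniform quasi-eulerian hypergraph in which every vertex has odd degree. Then $|V|\le |E|$.
   Context: A hypergraph $H=(V,E)$ consists of a finite nonempty vertex set $V$, a finite edge set $E$ disjoint from $V$, and an incidence function assigning to each edge $e\in E$ a subset of $V$ (also denoted $e$); distinct edges may have the same vertex set. $H$ is $3$-uniform if $|e|=3$ for all $e\in E$. The degree of a vertex is the number of edges containing it. A walk is a sequence $W=v_0e_1v_1e_2\cdots e_kv_k$ with $v_i\in V$, $e_i\in E$, such that for each $i$, $v_{i-1}\ne v_i$ and $v_{i-1},v_i\in e_i$; the $v_i$ are its anchors. $W$ is closed if $k\ge 2$ and $v_0=v_k$; it is a strict trail if $e_1,\dots,e_k$ are pairwise distinct. An Euler family of $H$ is a family of closed strict trails such that every edge of $H$ lies in exactly one trail and no two trails have a common anchor; $H$ is quasi-eulerian if it has one. *)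

From mathcomp Require Import all_boot.
Set Implicit Arguments. Unset Strict Implicit. Unset Printing Implicit Defensive.

(* A hypergraph: vertex finType V, edge finType E, incidence inc : E -> {set V}.
   Distinct edges may share the same vertex set. *)

Definition three_uniform (V E : finType) (inc : E -> {set V}) : Prop :=
  forall e : E, #|inc e| = 3.

Definition hdegree (V E : finType) (inc : E -> {set V}) (v : V) : nat :=
  #|[set e : E | v \in inc e]|.

(* A walk v0 e1 v1 ... ek vk is represented as (v0, [:: (e1,v1); ...; (ek,vk)]). *)
Definition walk_t (V E : Type) := (V * seq (E * V))%type.

Fixpoint is_walk_from (V E : finType) (inc : E -> {set V}) (u : V)
    (s : seq (E * V)) : bool :=
  match s with
  | [::] => true
  | (e, v) :: s' =>
      [&& u != v, u \in inc e, v \in inc e & is_walk_from inc v s']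
  end.

Definition is_walk (V E : finType) (inc : E -> {set V}) (W : walk_t V E) : bool :=
  is_walk_from inc W.1 W.2.

Definition walk_edges (V E : Type) (W : walk_t V E) : seq E := map fst W.2.

Definition anchors (V E : Type) (W : walk_t V E) : seq V := W.1 :: map snd W.2.

Definition is_closed (V : eqType) (E : Type) (W : walk_t V E) : bool :=
  (2 <= size W.2) && (last W.1 (map snd W.2) == W.1).

Definition is_closed_strict_trail (V E : finType) (inc : E -> {set V})
    (W : walk_t V E) : bool :=
  [&& is_walk inc W, is_closed W & uniq (walk_edges W)].

Definition euler_family (V E : finType) (inc : E -> {set V})
    (F : seq (walk_t V E)) : Prop :=
  [/\ forall W, W \in F -> is_closed_strict_trail inc W,
      forall e : E, count (fun W => e \in walk_edges W) F = 1 &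
      forall i j, i < j < size F -> forall w0 : walk_t V E,
        [disjoint (anchors (nth w0 F i)) & (anchors (nth w0 F j))]].

Definition quasi_eulerian (V E : finType) (inc : E -> {set V}) : Prop :=
  exists F : seq (walk_t V E), euler_family inc F.

From mathcomp Require Import all_boot.

Set Implicit Arguments.
Unset Strict Implicit.
Unset Printing Implicit Defensive.

(* Each edge is traversed by exactly one step of the Euler family, between two
   distinct anchors; its third vertex is the one it "passes".  Along a closed
   trail every anchor occurrence at [v] is both the head of one step and the
   tail of the next, so the number of steps having [v] as an end is even.  As
   the degree of [v] is odd, some step passes [v].  Hence "the vertex passed by
   the step traversing e" maps E onto V. *)

Lemma card_le_size_unique_witness (T : finType) (X : eqType) (R : T -> pred X)
    (s : seq X) :
  (forall v, has (R v) s) ->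
  (forall x v w, x \in s -> R v x -> R w x -> v = w) ->
  #|T| <= size s.
Proof.
move=> hasR uniqR.
have lt_find v : find (R v) s < size s by rewrite -has_find.
have inj_find : injective (fun v => Ordinal (lt_find v)).
  move=> v w /(congr1 val) /= eq_find.
  have [x0 _ _] := hasP (hasR v).
  apply: (uniqR (nth x0 s (find (R v) s))).
  - exact: mem_nth.
  - exact: nth_find.
  - by rewrite eq_find; apply: nth_find.
by rewrite -[size s]card_ord; apply: leq_card inj_find.
Qed.

Lemma perm_belast_closed (T : eqType) (u : T) (s : seq T) :
  last u s = u -> perm_eq (belast u s) s.
Proof.
move=> closed_s; rewrite -(perm_cons u) (lastI u s) closed_s.
by rewrite perm_sym perm_rcons.
Qed.

Section Steps.
Variables (V E : finType) (inc : E -> {set V}).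

Fixpoint walk_steps (u : V) (s : seq (E * V)) : seq (E * V * V) :=
  if s is (e, v) :: s' then (e, u, v) :: walk_steps v s' else [::].

Definition step_edge (st : E * V * V) : E := st.1.1.
Definition step_tail (st : E * V * V) : V := st.1.2.
Definition step_head (st : E * V * V) : V := st.2.

Definition proper_step (st : E * V * V) : bool :=
  [&& step_tail st != step_head st, step_tail st \in inc (step_edge st)
    & step_head st \in inc (step_edge st)].

Definition ends_at (v : V) (st : E * V * V) : bool :=
  (step_tail st == v) || (step_head st == v).

Definition passes (v : V) (st : E * V * V) : bool :=
  (v \in inc (step_edge st)) && ~~ ends_at v st.

Lemma hdegree_count v : hdegree inc v = count (fun e => v \in inc e) (enum E).
Proof. by rewrite /hdegree cardsE cardE enumT -size_filter. Qed.

Lemma walk_steps_edges u s : map step_edge (walk_steps u s) = map fst s.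
Proof. by elim: s u => [|[e v] s IHs] u //=; rewrite IHs. Qed.

Lemma walk_steps_proper u s :
  is_walk_from inc u s -> all proper_step (walk_steps u s).
Proof.
elim: s u => [|[e v] s IHs] u //= /and4P [uv ue ve walk_s].
by rewrite /proper_step /= uv ue ve IHs.
Qed.

Lemma count_tail_walk_steps u s v :
  count (fun st => step_tail st == v) (walk_steps u s)
  = count_mem v (belast u (map snd s)).
Proof. by elim: s u => [|[e w] s IHs] u //=; rewrite IHs eq_sym. Qed.

Lemma count_head_walk_steps u s v :
  count (fun st => step_head st == v) (walk_steps u s) = count_mem v (map snd s).
Proof. by elim: s u => [|[e w] s IHs] u //=; rewrite IHs eq_sym. Qed.

Lemma count_ends_at_proper (L : seq (E * V * V)) v :
  all proper_step L ->
  count (ends_at v) L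
  = count (fun st => step_tail st == v) L + count (fun st => step_head st == v) L.
Proof.
move=> properL; rewrite -count_predUI -[LHS]addn0; congr (_ + _).
apply/esym/eqP; rewrite -leqn0 leqNgt -has_count.
apply/hasPn => st /(allP properL).
by case/and3P=> tail_head _ _; apply: contra tail_head => /andP [/eqP -> /eqP ->].
Qed.

Lemma closed_walk_ends_at_even W v :
  is_walk inc W -> is_closed W -> ~~ odd (count (ends_at v) (walk_steps W.1 W.2)).
Proof.
case: W => u s walk_s /andP [_ /eqP /= closed_s] /=.
rewrite count_ends_at_proper ?walk_steps_proper //.
rewrite count_tail_walk_steps count_head_walk_steps.
by rewrite (permP (perm_belast_closed closed_s)) addnn odd_double.
Qed.

Lemma passes_unique st v w :
  three_uniform inc -> proper_step st -> passes v st -> passes w st -> v = w.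
Proof.
move=> uniform /and3P [tail_head tail_e head_e].
set passed := inc (step_edge st) :\: [set step_tail st; step_head st].
have passed_set x : passes x st = (x \in passed).
  by rewrite /passes /ends_at in_setD in_set2 andbC !(eq_sym x).
have /card_le1_eqP passed_le1 : #|passed| <= 1.
  rewrite cardsD (setIidPr _) ?uniform ?cards2 ?tail_head //.
  by apply/subsetP => x; rewrite !inE => /orP [] /eqP ->.
by rewrite !passed_set => pv pw; apply: passed_le1.
Qed.

Definition family_steps (F : seq (walk_t V E)) : seq (E * V * V) :=
  flatten [seq walk_steps W.1 W.2 | W <- F].

Lemma family_steps_edges F :
  map step_edge (family_steps F) = flatten [seq walk_edges W | W <- F].
Proof. by elim: F => [|W F IHF] //=; rewrite map_cat walk_steps_edges IHF. Qed.

Section EulerFamily.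
Variable F : seq (walk_t V E).
Hypothesis trailsF : forall W, W \in F -> is_closed_strict_trail inc W.
Hypothesis edge_onceF : forall e : E, count (fun W => e \in walk_edges W) F = 1.

Lemma family_steps_proper : all proper_step (family_steps F).
Proof.
apply/allP => st /flattenP [_ /mapP [W W_F ->]].
by case/and3P: (trailsF W_F) => walk_W _ _; apply/allP/walk_steps_proper.
Qed.

Lemma family_ends_at_even v : ~~ odd (count (ends_at v) (family_steps F)).
Proof.
rewrite count_flatten -map_comp; elim: F trailsF => [|W F' IHF'] //= trails.
have /and3P [walk_W closed_W _] := trails W (mem_head _ _).
rewrite oddD (negbTE (closed_walk_ends_at_even v walk_W closed_W)).
rewrite IHF' // => W' W'_F'.
by apply: trails; rewrite inE W'_F' orbT.
Qed.

Lemma perm_family_edges : perm_eq (flatten [seq walk_edges W | W <- F]) (enum E).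
Proof.
have count_edge e : count_mem e (flatten [seq walk_edges W | W <- F]) = 1.
  rewrite count_flatten -map_comp -(edge_onceF e) -sumn_count; congr sumn.
  apply/eq_in_map => W W_F /=; apply: count_uniq_mem.
  by case/and3P: (trailsF W_F).
have mem_edge e : e \in flatten [seq walk_edges W | W <- F].
  by rewrite -has_pred1 has_count count_edge.
apply: uniq_perm; rewrite ?enum_uniq //.
  by apply: count_mem_uniq => e; rewrite count_edge mem_edge.
by move=> e; rewrite mem_edge mem_enum.
Qed.

Lemma count_family_steps (P : pred E) :
  count (fun st => P (step_edge st)) (family_steps F) = count P (enum E).
Proof.
rewrite -(count_map step_edge P) family_steps_edges.
exact/permP/perm_family_edges.
Qed.

Lemma size_family_steps : size (family_steps F) = #|E|.
Proof.
by rewrite -count_predT (count_family_steps predT) count_predT cardE enumT.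
Qed.

Lemma has_passing_step v : odd (hdegree inc v) -> has (passes v) (family_steps F).
Proof.
have degree_split : hdegree inc v
    = count (ends_at v) (family_steps F) + count (passes v) (family_steps F).
  rewrite hdegree_count -(count_family_steps (fun e => v \in inc e)).
  rewrite -size_filter -(count_predC (ends_at v)) !count_filter.
  congr (_ + _); last by apply: eq_count => st; rewrite /= andbC.
  apply: eq_in_count => st /(allP family_steps_proper).
  case/and3P=> _ tail_e head_e /=.
  by case: (boolP (ends_at v st)) => //= /orP [] /eqP <-.
rewrite degree_split oddD (negbTE (family_ends_at_even v)) has_count.
by case: count.
Qed.

End EulerFamily.
End Steps.

Theorem corollary2p40 (V E : finType) (inc : E -> {set V}) :
  0 < #|V| ->
  three_uniform inc ->
  quasi_eulerian inc ->
  (forall v : V, odd (hdegree inc v)) ->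
  #|V| <= #|E|.
Proof.
move=> _ uniform [F [trailsF edge_onceF _]] odd_degree.
rewrite -(size_family_steps trailsF edge_onceF).
apply: (@card_le_size_unique_witness _ _ (passes inc)).
- by move=> v; apply: has_passing_step (odd_degree v).
- move=> st v w /(allP (family_steps_proper trailsF)).
  exact: passes_unique.
Qed.
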